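(* Let $\mathcal F=(f_t)$ be a continuous flow on a compact metric space $X$, $\varphi\colon X\to\mathbb{R}$ continuous, and $\lambda\colon X\to[0,\infty)$ bounded and lower semicontinuous. For $\eta>0$ let $B(\eta)=\{(x,t)\in X\times[0,\infty): \frac1t\int_0^t\lambda(f_sx)\,ds\le\eta\}$. Then for every $\eta>0$ and every $\varepsilon>0$, $P([B(\eta)],\varphi)\le P(B(\eta+\varepsilon),\varphi)$.
   Context: For $\mathcal C\subset X\times[0,\infty)$, $[\mathcal C]=\{(x,n)\in X\times\mathbb N: (f_{-s}x,n+s+t)\in\mathcal C\text{ for some }s,t\in[0,1]\}$. For a collection $\mathcal C$ of orbit segments, with $\mathcal C_t=\{x:(x,t)\in\mathcal C\}$: $\Lambda_t(\mathcal C,\varphi,\varepsilon)=\sup\{\sum_{x\in E}e^{\int_0^t\varphi(f_sx)ds}: E\subset\mathcal C_t\ (t,\varepsilon)\text{-separated}\}$, $P(\mathcal C,\varphi,\varepsilon)=\limsup_{t\to\infty}\frac1t\log\Lambda_t(\mathcal C,\varphi,\varepsilon)$, $P(\mathcal C,\varphi)=\lim_{\varepsilon\to0}P(\mathcal C,\varphi,\varepsilon)$. *)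

From HB Require Import structures.
From mathcomp Require Import all_boot all_order all_algebra finmap.
From mathcomp Require Import all_classical all_reals all_analysis.
Set Implicit Arguments. Unset Strict Implicit. Unset Printing Implicit Defensive.
Import Order.TTheory GRing.Theory Num.Theory.
Import numFieldNormedType.Exports.
Local Open Scope classical_set_scope.
Local Open Scope ring_scope.

Section Flow.
Context {R : realType} {X : metricType R}.

Definition is_continuous_flow (f : R -> X -> X) : Prop :=
  (forall x, f 0 x = x) /\
  (forall s t x, f (s + t) x = f s (f t x)) /\
  continuous (fun p : R * X => f p.1 p.2).

Definition bowen_dist (f : R -> X -> X) (t : R) (x y : X) : R :=
  sup [set mdist (f s x) (f s y) | s in `[0, t]].

Definition separated (f : R -> X -> X) (t eps : R) (E : {fset X}) : Prop :=
  forall x y, x \in E -> y \in E -> x != y -> eps < bowen_dist f t x y.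

Definition slice (C : set (X * R)) (t : R) : set X := [set x | C (x, t)].

Definition birkhoff_int (f : R -> X -> X) (phi : X -> R) (t : R) (x : X) : R :=
  (\int[@lebesgue_measure R]_(s in `[0, t]) phi (f s x))%R.

Definition Lambda (f : R -> X -> X) (C : set (X * R)) (phi : X -> R)
    (eps t : R) : \bar R :=
  ereal_sup [set (\sum_(x <- E) expR (birkhoff_int f phi t x))%:E
            | E in [set E : {fset X} |
                    (forall x, x \in E -> slice C t x) /\ separated f t eps E]].

Definition pressure_eps (f : R -> X -> X) (C : set (X * R)) (phi : X -> R)
    (eps : R) : \bar R :=
  limf_esup (fun t : R => ((t^-1)%:E * lne (Lambda f C phi eps t))%E)
            (@pinfty_nbhs R).

Definition pressure (f : R -> X -> X) (C : set (X * R)) (phi : X -> R) : \bar R :=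
  lim (pressure_eps f C phi e @[e --> 0^'+]).

Definition discretize (f : R -> X -> X) (C : set (X * R)) : set (X * R) :=
  [set p | exists n : nat, p.2 = n%:R /\
     exists s t : R, (0 <= s <= 1) /\ (0 <= t <= 1) /\
       C (f (- s) p.1, n%:R + s + t)].

Definition Bset (f : R -> X -> X) (lam : X -> R) (eta : R) : set (X * R) :=
  [set p | 0 <= p.2 /\ p.2^-1 * birkhoff_int f lam p.2 p.1 <= eta].

End Flow.

From HB Require Import structures.
From mathcomp Require Import all_boot all_order all_algebra finmap.
From mathcomp Require Import all_classical all_reals all_analysis.
From mathcomp Require Import measurable_realfun.
From mathcomp Require Import lra.
Import Order.TTheory GRing.Theory Num.Theory.
Import numFieldNormedType.Exports.
Local Open Scope classical_set_scope.
Local Open Scope ring_scope.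

(* Pressure only depends on the slices C_t for large t, and is monotone in
   them.  If the orbit segment of y = f_{-s} x of length n + s + t'
   (s, t' in [0, 1]) has lambda-average at most eta, then the segment of x
   of length n sits inside it and, lambda being nonnegative, has integral at
   most eta (n + 2); its average is thus at most eta + 2 eta / n, which is
   below eta + eps once n >= 2 eta / eps. *)

Section pressure_monotone.
Context {R : realType} {X : metricType R} (f : R -> X -> X).

Lemma Lambda_ge0 C phi e t : (0 <= Lambda f C phi e t)%E.
Proof.
apply: le_ereal_sup_tmp; exists 0%E => //.
exists fset0; last by rewrite big_nil.
by split=> [x|x y]; rewrite inE.
Qed.

Lemma le_Lambda C1 C2 phi e1 e2 t : e2 <= e1 ->
  slice C1 t `<=` slice C2 t ->
  (Lambda f C1 phi e1 t <= Lambda f C2 phi e2 t)%E.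
Proof.
move=> e21 C12; apply: ereal_sup_le => _ [E [EC1 Esep] <-].
exists E => //; split=> [x /EC1/C12 //|x y xE yE xy].
exact: le_lt_trans e21 (Esep x y xE yE xy).
Qed.

Lemma le_limf_esup {T : choiceType} {U : filteredType T}
    (F : set_system U) {FF : Filter F} (g h : U -> \bar R) :
  (\forall t \near F, g t <= h t)%E -> (limf_esup g F <= limf_esup h F)%E.
Proof.
move=> gh; rewrite !limf_esupE; apply: le_ereal_inf_tmp => _ [V FV <-].
apply: (@le_trans _ _ (ereal_sup (g @` (V `&` [set t | g t <= h t]%E)))).
  by apply: ereal_inf_lbound; exists (V `&` [set t | g t <= h t]%E) => //; exact: filterI.
apply: ge_ereal_sup => _ [t [Vt /= ght] <-].
by apply: le_trans ght _; apply: ereal_sup_ubound; exists t.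
Qed.

Lemma le_pressure_eps C1 C2 phi e1 e2 : e2 <= e1 ->
  (\forall t \near +oo, slice C1 t `<=` slice C2 t) ->
  (pressure_eps f C1 phi e1 <= pressure_eps f C2 phi e2)%E.
Proof.
move=> e21 C12; apply: le_limf_esup; near=> t.
have t0 : 0 < t by near: t; exact: nbhs_pinfty_gt.
apply: lee_wpmul2l; first by rewrite lee_fin invr_ge0 ltW.
rewrite lee_lne ?in_itv /= ?Lambda_ge0 ?leey //.
by apply: le_Lambda => //; near: t; exact: C12.
Unshelve. all: by end_near. Qed.

(* [pressure_eps] increases as eps decreases, so its limit at 0+ is a sup. *)
Lemma pressureE C phi :
  pressure f C phi = ereal_sup [set pressure_eps f C phi e | e in `]0, +oo[].
Proof.
apply: cvg_lim => //; apply: (@nonincreasing_at_right_cvge _ _ 0 +oo%O) => //.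
by move=> a b _ _ ab; apply: le_pressure_eps => //; near=> t.
Unshelve. all: by end_near. Qed.

Lemma le_pressure C1 C2 phi :
  (\forall t \near +oo, slice C1 t `<=` slice C2 t) ->
  (pressure f C1 phi <= pressure f C2 phi)%E.
Proof.
move=> C12; rewrite !pressureE; apply: ge_ereal_sup => _ [e e0 <-].
apply: le_trans (le_pressure_eps C1 C2 phi e e (lexx e) C12) _.
by apply: ereal_sup_ubound; exists e.
Qed.

End pressure_monotone.

Section lebesgue_measure_shift.
Context {R : realType}.
Local Notation mu := (@lebesgue_measure R).

Lemma measurable_shift (s : R) : measurable_fun [set: R] (shift s).
Proof. by apply: measurable_funD => //; exact: measurable_cst. Qed.

Lemma lebesgue_measure_shift (s : R) (A : set R) : measurable A ->
  pushforward mu (shift s : _ -> measurableTypeR R) A = mu A.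
Proof.
move=> mA; apply/esym/lebesgue_measure_unique => //=; first exact: measurable_shift.
move=> _ _ [[a b]] _ <-; rewrite /pushforward.
have -> : shift s @^-1` `]a, b] = `](a - s), (b - s)]%classic.
  by apply/seteqP; split=> x /=; rewrite !in_itv /= ltrBlDr lerBrDr.
rewrite !lebesgue_measure_itv /= !lte_fin ltrD2r.
by case: ifP => // _; rewrite -!EFinD opprB addrA subrK.
Qed.

Lemma ge0_integral_shift (g : R -> \bar R) (a b s : R) :
  measurable_fun [set: R] g -> (forall x, 0 <= g x)%E ->
  (\int[mu]_(u in `[a, b]) g (u + s)%R =
   \int[mu]_(v in `[(a + s)%R, (b + s)%R]) g v)%E.
Proof.
(* [ms] must be in the context for [pushforward mu (shift s)] to be
   recognised as a measure. *)
move=> mg g0; have ms := measurable_shift s.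
rewrite [RHS](eq_measure_integral (pushforward mu (shift s : _ -> measurableTypeR R)));
  last by move=> A mA _; exact/esym/lebesgue_measure_shift.
rewrite ge0_integral_pushforward //; last exact: measurable_funS mg.
congr (integral _ _ _); apply/seteqP; split=> x /=;
  by rewrite !in_itv /= !lerD2r.
Qed.

End lebesgue_measure_shift.

Section flow_integrals.
Context {R : realType} {X : metricType R} (f : R -> X -> X) (lam : X -> R).
Local Notation mu := (@lebesgue_measure R).
Hypothesis flow_f : is_continuous_flow f.
Hypothesis lam_ge0 : forall x, 0 <= lam x.
Hypothesis lam_bounded : exists M : R, forall x, lam x <= M.
Hypothesis lam_lsc : lower_semicontinuous (fun x => (lam x)%:E).

Lemma flowK s x : f s (f (- s) x) = x.
Proof. by case: flow_f => f0 [fD _]; rewrite -fD subrr f0. Qed.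

Lemma continuous_orbit y : continuous (f^~ y).
Proof.
case: flow_f => _ [_ fC] u.
exact: (cvg_comp _ _ (cvg_pair cvg_id (cvg_cst y)) (fC (u, y))).
Qed.

Lemma measurable_lam_orbit y : measurable_fun [set: R] (fun u => (lam (f u y))%:E).
Proof.
apply: lower_semicontinuous_measurable; apply/lower_semicontinuousP => a.
exact: (@open_comp _ _ (f^~ y) [set x | a%:E < (lam x)%:E]%E
  (fun u _ => continuous_orbit y u) (proj1 (lower_semicontinuousP _) lam_lsc a)).
Qed.

Lemma integral_lam_orbit_fin_num y a b :
  (\int[mu]_(u in `[a, b]) (lam (f u y))%:E)%E \is a fin_num.
Proof.
have [M lamM] := lam_bounded.
rewrite ge0_fin_numE; last by apply: integral_ge0 => u _; rewrite lee_fin.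
apply: (@le_lt_trans _ _ (\int[mu]_(u in `[a, b]) (cst M%:E) u)%E).
  apply: ge0_le_integral => //.
  - by move=> u _; rewrite lee_fin.
  - exact: measurable_funS (measurable_lam_orbit y).
  - by move=> u _; rewrite lee_fin.
rewrite integral_cst // lte_mul_pinfty // ?lee_fin ?(le_trans (lam_ge0 y)) //.
exact: compact_finite_measure (@segment_compact R a b).
Qed.

(* After the change of variables u -> u + s, the segment [s, s + t] sits
   inside [0, t + s + t'], and lam is nonnegative. *)
Lemma le_birkhoff_int_flow y s t t' : 0 <= s -> 0 <= t' ->
  birkhoff_int f lam t (f s y) <= birkhoff_int f lam (t + s + t') y.
Proof.
move=> s0 t'0; have [_ [fD _]] := flow_f.
apply: fine_le; rewrite ?integral_lam_orbit_fin_num //.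
under eq_integral do rewrite -fD.
rewrite (@ge0_integral_shift _ (fun v => (lam (f v y))%:E)) //; last first.
  - by move=> u; rewrite lee_fin.
  - exact: measurable_lam_orbit.
apply: ge0_subset_integral => //; first exact: measurable_funS (measurable_lam_orbit y).
  by move=> u _; rewrite lee_fin.
by move=> u /=; rewrite !in_itv /= => /andP[su ust]; apply/andP; split; lra.
Qed.

Lemma slice_discretize_Bset eta eps : 0 <= eta -> 0 < eps ->
  \forall t \near +oo,
    slice (discretize f (Bset f lam eta)) t `<=` slice (Bset f lam (eta + eps)) t.
Proof.
move=> eta0 eps0; near=> t.
move=> x /= [n [/= tn [s [t' [/andP[s0 s1] [/andP[t'0 t'1] [_ /=]]]]]]].
have t0 : 0 < t by near: t; exact: nbhs_pinfty_gt.
have t_ge : 2 * eta / eps <= t by near: t; apply: nbhs_pinfty_ge; rewrite num_real.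
rewrite -tn ler_pdivrMl; last by lra.
set y := f (- s) x => avg_y.
have avg_x : birkhoff_int f lam t x <= eta * (t + s + t').
  by rewrite -[x](flowK s); apply: le_trans (le_birkhoff_int_flow y _ t _ s0 t'0) _; lra.
split=> /=; first exact: ltW.
rewrite ler_pdivrMl //.
have : 2 * eta <= eps * t by rewrite -ler_pdivrMl // mulrC.
nra.
Unshelve. all: by end_near. Qed.

End flow_integrals.

Theorem lemma3p5 (R : realType) (X : metricType R) (f : R -> X -> X)
    (phi lam : X -> R) :
  compact [set: X] ->
  is_continuous_flow f ->
  continuous phi ->
  (forall x, 0 <= lam x) ->
  (exists M : R, forall x, lam x <= M) ->
  lower_semicontinuous (fun x => (lam x)%:E) ->
  forall eta eps : R, 0 < eta -> 0 < eps ->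
    (pressure f (discretize f (Bset f lam eta)) phi
     <= pressure f (Bset f lam (eta + eps)) phi)%E.
Proof.
move=> _ flow_f _ lam_ge0 lam_bounded lam_lsc eta eps eta0 eps0.
apply: le_pressure.
exact: slice_discretize_Bset (ltW eta0) eps0.
Qed.
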